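(* Let $S$ be a finite non-abelian simple group and let $p$ be a prime with $\gcd(|S|,p)=1$. Then $S\times\mathbb{Z}_p$ is $\psi$-normal divisible. In particular, for every prime $p$ with $\gcd(60,p)=1$, the group $A_5\times\mathbb{Z}_p$ is $\psi$-normal divisible.
   Context: For a finite group $G$, $\psi(G)=\sum_{x\in G} o(x)$ denotes the sum of the orders of all elements of $G$. A finite group $G$ is called $\psi$-normal divisible if $\psi(H)$ divides $\psi(G)$ for every normal subgroup $H$ of $G$. *)

From HB Require Import structures.
From mathcomp Require Import all_boot all_fingroup all_solvable all_algebra.
Set Implicit Arguments. Unset Strict Implicit. Unset Printing Implicit Defensive.

Local Open Scope group_scope.

Definition psi (gT : finGroupType) (G : {set gT}) : nat :=
  (\sum_(x in G) #[x])%N.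

Definition psi_normal_divisible (gT : finGroupType) (G : {set gT}) : Prop :=
  forall H : {group gT}, H <| G -> psi H %| psi G.

From HB Require Import structures.
From mathcomp Require Import all_boot all_fingroup all_solvable all_algebra.

(* In G x K with coprime |G| and |K|, element orders multiply, so psi(G x K) =
   psi(G) psi(K); moreover every subgroup H of G x K splits as A x B with A <= G and B <= K, since a
   suitable power (given by the Chinese remainder theorem) of any (a, b) in H is
   (a, 1), and another one is (1, b). If H is normal, A and B are normal in G
   and K. Hence psi-normal divisibility passes to coprime direct products, and
   simple groups, in particular groups of prime order, trivially have it. *)

Set Implicit Arguments.
Unset Strict Implicit.
Unset Printing Implicit Defensive.

Local Open Scope group_scope.

Lemma psi1 (gT : finGroupType) : psi [1 gT] = 1%N.
Proof. by rewrite /psi big_set1 order1. Qed.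

Lemma simple_psi_normal_divisible (gT : finGroupType) (G : {group gT}) :
  simple G -> psi_normal_divisible G.
Proof. by case/simpleP=> _ simG H /simG[] ->; rewrite ?psi1. Qed.

Lemma prime_card_simple (gT : finGroupType) (G : {group gT}) :
  prime #|G| -> simple G.
Proof.
move=> prG; apply/simpleP; split; first by rewrite trivg_card1; case: eqP prG => // ->.
move=> H /andP[sHG _]; case: (prime_subgroupVti H prG) => [sGH | tiHG].
  by right; apply/eqP; rewrite eqEsubset sHG.
by left; apply/eqP; rewrite -tiHG eqEsubset subsetIl subsetI subxx sHG.
Qed.

Section CoprimeDirectProduct.
Variables gT1 gT2 : finGroupType.
Implicit Types (x : gT1) (y : gT2).

Lemma expg_pair x y n : (x, y) ^+ n = (x ^+ n, y ^+ n).
Proof. by elim: n => // n IHn; rewrite !expgS IHn. Qed.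

Lemma order_pair_coprime x y :
  coprime #[x] #[y] -> #[(x, y)] = (#[x] * #[y])%N.
Proof.
move=> coxy; apply/eqP; rewrite eqn_dvd; apply/andP; split.
  by rewrite order_dvdn expg_pair expgM expg_order mulnC expgM expg_order !expg1n.
rewrite Gauss_dvd // !order_dvdn.
by have := expg_order (x, y); rewrite expg_pair => -[-> ->]; rewrite !eqxx.
Qed.

Lemma psi_setX (G : {group gT1}) (K : {group gT2}) :
  coprime #|G| #|K| -> psi (setX G K) = (psi G * psi K)%N.
Proof.
move=> coGK; rewrite /psi big_distrl /=; under [RHS]eq_bigr do rewrite big_distrr /=.
rewrite pair_big_dep /=; apply: eq_big => [[x y] | [x y]].
  by rewrite in_setX.
rewrite in_setX => /andP[xG yK]; rewrite order_pair_coprime //.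
exact: coprime_dvdl (order_dvdG xG) (coprime_dvdr (order_dvdG yK) coGK).
Qed.

Variables (G : {group gT1}) (K : {group gT2}).
Hypothesis coGK : coprime #|G| #|K|.

Lemma expg_pair_chinese x y r s : x \in G -> y \in K ->
  (x, y) ^+ chinese #|G| #|K| r s = (x ^+ r, y ^+ s).
Proof.
move=> xG yK; rewrite expg_pair.
rewrite -(expg_mod _ (expg_cardG xG)) chinese_modl // expg_mod ?expg_cardG //.
by rewrite -(expg_mod _ (expg_cardG yK)) chinese_modr // expg_mod ?expg_cardG.
Qed.

Lemma coprime_subgroup_setX (H : {group gT1 * gT2}) :
  H \subset setX G K ->
  H :=: setX (pairg1 gT2 @*^-1 H) (@pair1g gT1 gT2 @*^-1 H).
Proof.
move=> sHGK; apply/setP=> -[x y]; rewrite in_setX !inE /=.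
apply/idP/andP=> [Hxy | [Hx1 H1y]]; last first.
  by rewrite -[x]mulg1 -[y]mul1g -[(_, _)]/((x, 1) * (1, y)) groupM.
have /andP[xG yK] : (x \in G) && (y \in K) by rewrite -in_setX (subsetP sHGK).
have := groupX (chinese #|G| #|K| 1 0) Hxy.
have := groupX (chinese #|G| #|K| 0 1) Hxy.
by rewrite !expg_pair_chinese // !expg1 !expg0 => -> ->.
Qed.

Lemma morphpre_pairg1_setX : pairg1 gT2 @*^-1 setX G K = G.
Proof. by apply/setP=> x; rewrite !inE group1 andbT. Qed.

Lemma morphpre_pair1g_setX : @pair1g gT1 gT2 @*^-1 setX G K = K.
Proof. by apply/setP=> y; rewrite !inE group1. Qed.

Lemma psi_normal_divisible_setX :
  psi_normal_divisible G -> psi_normal_divisible K ->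
  psi_normal_divisible (setX G K).
Proof.
move=> psiG psiK H /andP[sHGK nHGK].
have nAG : pairg1 gT2 @*^-1 H <| G.
  by rewrite /normal -{1 2}morphpre_pairg1_setX morphpreS //= morphpre_norms.
have nBK : @pair1g gT1 gT2 @*^-1 H <| K.
  by rewrite /normal -{1 2}morphpre_pair1g_setX morphpreS //= morphpre_norms.
have coAB : coprime #|pairg1 gT2 @*^-1 H| #|@pair1g gT1 gT2 @*^-1 H|.
  exact: coprime_dvdl (cardSg (normal_sub nAG))
    (coprime_dvdr (cardSg (normal_sub nBK)) coGK).
rewrite (coprime_subgroup_setX sHGK) (psi_setX coAB) (psi_setX coGK).
exact: dvdn_mul (psiG _ nAG) (psiK _ nBK).
Qed.

End CoprimeDirectProduct.

Lemma card_Alt5 : #|'Alt_('I_5)| = 60.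
Proof.
have : (2 * #|'Alt_('I_5)|)%N = (2 * 60)%N by rewrite card_Alt card_ord.
by move/eqP; rewrite eqn_pmul2l // => /eqP.
Qed.

Theorem theorem3p1 :
  (forall (gT : finGroupType) (S : {group gT}) (p : nat),
      simple S -> ~~ abelian S -> prime p -> coprime #|S| p ->
      psi_normal_divisible (setX S (Zp p)))
  /\
  (forall p : nat, prime p -> coprime 60 p ->
      psi_normal_divisible (setX ('Alt_('I_5)) (Zp p))).
Proof.
have simple_times_Zp gT (S : {group gT}) p :
    simple S -> prime p -> coprime #|S| p ->
    psi_normal_divisible (setX S (Zp p)).
  move=> simS prp coSp; have cardZp := card_Zp (prime_gt0 prp).
  apply: psi_normal_divisible_setX; first by rewrite cardZp.
    exact: simple_psi_normal_divisible.
  by apply/simple_psi_normal_divisible/prime_card_simple; rewrite cardZp.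
split=> [gT S p simS _ | p prp co60p]; first exact: simple_times_Zp.
apply: simple_times_Zp; rewrite ?card_Alt5 //.
by apply: simple_Alt5; rewrite card_ord.
Qed.
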